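(* Let $S$ be a countably compact Hausdorff topological Clifford semigroup which is a strong semilattice of topological groups. The following are equivalent: (1) $S$ is metrizable; (2) $E(S)$ is a $G_\delta$-subset of $S$; (3) for every $e\in E(S)$, the singleton $\{e\}$ is a $G_\delta$-subset of $G_e$.
   Context: A Clifford semigroup is an inverse semigroup (each $x$ has a unique $x^{-1}$ with $xx^{-1}x=x$, $x^{-1}xx^{-1}=x^{-1}$) with $xx^{-1}=x^{-1}x$ for all $x$; topological means multiplication and inversion are continuous. $E(S)$ is the set of idempotents, ordered by $e\le f\iff ef=e$; $G_e:=\{x: xx^{-1}=e\}$; $\varphi_{f,e}\colon G_f\to G_e$, $x\mapsto ex$. $S$ is a strong semilattice of topological groups if the bonding maps are continuous and the topology of $S$ is the disjoint-union topology of the subspaces $G_e$. A $G_\delta$-subset is a countable intersection of open sets. Known fact that may be used (Metrizability of Clifford topological semigroups, Thm 3.4): a countably compact Hausdorff topological Clifford semigroup $S$ is metrizable provided $E(S)$ is a metrizable $G_\delta$-subset of $S$. *)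

From HB Require Import structures.
From Stdlib Require Import Rdefinitions Raxioms.
From mathcomp Require Import all_boot all_order all_algebra.
From mathcomp Require Import all_classical all_reals topology borel_hierarchy.
Set Implicit Arguments. Unset Strict Implicit. Unset Printing Implicit Defensive.
Local Open Scope classical_set_scope.

Section Clifford.
Context {S : topologicalType} (mul : S -> S -> S) (inv : S -> S).

Definition inverse_semigroup : Prop :=
  (forall x y z, mul x (mul y z) = mul (mul x y) z) /\
  (forall x, mul (mul x (inv x)) x = x /\ mul (mul (inv x) x) (inv x) = inv x) /\
  (forall x y, mul (mul x y) x = x -> mul (mul y x) y = y -> y = inv x).

Definition clifford_semigroup : Prop :=
  inverse_semigroup /\ forall x, mul x (inv x) = mul (inv x) x.

Definition topological_clifford_semigroup : Prop :=
  clifford_semigroup /\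
  continuous (fun p : S * S => mul p.1 p.2) /\ continuous inv.

Definition idempotents : set S := [set e | mul e e = e].

Definition Gsub (e : S) : set S := [set x | mul x (inv x) = e].

(** Bonding map phi_{f,e} : G_f -> G_e, x |-> e x (for e <= f, i.e. ef = e). *)
Definition bonding (f e : S) : S -> S := fun x => mul e x.

Definition open_in (B A : set S) : Prop :=
  exists U : set S, open U /\ A `&` B = U `&` B.

(** Strong semilattice of topological groups: bonding maps are continuous
    (as maps on the subspace G_f) and the topology of S is the disjoint-union
    topology of the subspaces G_e. *)
Definition strong_semilattice_of_topgroups : Prop :=
  (forall e f, idempotents e -> idempotents f -> mul e f = e ->
     {within Gsub f, continuous (bonding f e)}) /\
  (forall A : set S, open A <-> forall e, idempotents e -> open_in (Gsub e) A).

End Clifford.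

Definition countably_compact (T : topologicalType) : Prop :=
  forall U : nat -> set T, (forall n, open (U n)) ->
    setT `<=` \bigcup_n U n ->
    exists N : nat, setT `<=` \bigcup_(n in [set k | (k < N)%N]) U n.

Definition Gdelta_in (T : topologicalType) (B A : set T) : Prop :=
  exists2 F : nat -> set T, (forall i, open (F i)) & A = B `&` \bigcap_i F i.

Definition is_metric (T : Type) (d : T -> T -> R) : Prop :=
  (forall x y, Rle R0 (d x y)) /\
  (forall x y, d x y = R0 <-> x = y) /\
  (forall x y, d x y = d y x) /\
  (forall x y z, Rle (d x z) (Rplus (d x y) (d y z))).

Definition metrizable (T : topologicalType) : Prop :=
  exists d : T -> T -> R, is_metric d /\
    forall A : set T, open A <->
      (forall x, A x -> exists eps : R, Rlt R0 eps /\
         [set y | Rlt (d x y) eps] `<=` A).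

From HB Require Import structures.
From Stdlib Require Import Rdefinitions RIneq Lra.
From Stdlib Require Rtrigo_def.
From mathcomp Require Import all_boot all_order all_algebra.
From mathcomp Require Import all_classical all_reals topology borel_hierarchy.
From mathcomp Require Import normedtype Rstruct Rstruct_topology.
Set Implicit Arguments. Unset Strict Implicit. Unset Printing Implicit Defensive.
Import Order.TTheory GRing.Theory Num.Theory.
Local Open Scope classical_set_scope.

(** Write E(S) = \bigcap_n F_n with F_n open. One builds open neighbourhoods
    W_n of E(S) with W_{n+1} inside F_n and, within each group G_e,
    W_{n+1}^-1 and W_{n+1} W_{n+1} inside W_n. The relations "x and y lie in
    the same G_e and x^-1 y is in W_n" are then a countable base of a
    uniformity on S. It induces the topology of S because the G_e are open
    and the G_e `&` W_n form a neighbourhood base at e: a sequence of points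
    x_n of G_e `&` W_n has a cluster point by countable compactness, and any
    such cluster point lies in G_e `&` \bigcap_n W_n = {e}. A Hausdorff space
    whose uniformity has a countable base is metrizable.
    Conversely, points of a metric space are G_delta, and G_delta singletons
    {e} of the G_e glue to a G_delta set E(S) = \bigcap_i \bigcup_e (G_e `&` F_e,i)
    because the G_e are open and pairwise disjoint. *)

Definition seq_cluster (T : topologicalType) (x : nat -> T) (z : T) : Prop :=
  forall U, open U -> U z -> forall m, exists2 k, (m <= k)%N & U (x k).

Lemma countably_compact_seq_cluster (T : topologicalType) (x : nat -> T) :
  countably_compact T -> exists z, seq_cluster x z.
Proof.
move=> ccT; apply: contrapT => noz.
pose U m := \bigcup_(V in [set V | open V /\ forall k, (m <= k)%N -> ~ V (x k)]) V.
have oU m : open (U m) by apply: bigcup_open => V [].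
have covU : setT `<=` \bigcup_m U m.
  move=> z _; apply: contrapT => zU; apply: noz; exists z => V oV Vz m.
  apply: contrapT => xV; apply: zU; exists m => //; exists V => //.
  by split => // k mk Vk; apply: xV; exists k.
have [N /(_ (x N) I)[m /= mN [V [_ xV] VxN]]] := ccT U oU covU.
exact: xV N (ltnW mN) VxN.
Qed.

Lemma Gdelta_in_setI (T : topologicalType) (B A : set T) :
  Gdelta A -> Gdelta_in B (B `&` A).
Proof. by move=> [F oF ->]; exists F. Qed.

Lemma metrizable_point_Gdelta (T : topologicalType) (x : T) :
  metrizable T -> Gdelta [set x].
Proof.
move=> [d [[d_ge0 [d_eq0 [_ d_tri]]] d_open]].
exists (fun i => [set y | Rlt (d x y) (/ INR i.+1)]).
  move=> i; set r := Rinv (INR i.+1); clearbody r.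
  apply/d_open => y /= dxy; exists (Rminus r (d x y)); split; first by lra.
  by move=> z /= dyz; have := d_tri x y z; lra.
apply/seteqP; split => [_ -> i _|y dxy].
  change (Rlt (d x x) (/ INR i.+1)); rewrite (proj2 (d_eq0 x x) erefl).
  by apply/Rinv_0_lt_compat/lt_0_INR/ssrnat.ltP.
apply/esym/d_eq0; have [dpos|<-//] := Rle_lt_or_eq_dec _ _ (d_ge0 x y).
have [N [ltN /ssrnat.ltP N0]] := Rtrigo_def.archimed_cor1 _ dpos.
have dxyN : Rlt (d x y) (/ INR N) by rewrite -(prednK N0); exact: (dxy N.-1 I).
lra.
Qed.

Section CountableUniformMetric.
Variable T : uniformType.
Hypotheses (hT : hausdorff_space T) (cntT : countable_uniformity T).

Local Notation M := (countable_uniform.type cntT).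
Let dist (x y : T) : R := fine (@edist R M (x, y)).

(* Any two points are in a ball of radius 2, so [edist] is finite. *)
Let edistE x y : @edist R M (x, y) = (dist x y)%:E.
Proof.
rewrite /dist fineK // ge0_fin_numE //.
have := @edist_fin R M 2%R (x, y) (ltr0Sn _ 1)
  (@countable_uniform.countable_uniform_bounded R T cntT x y).
by move/le_lt_trans; apply; exact: ltry.
Qed.

Lemma countable_uniformity_metrizable : metrizable T.
Proof.
exists dist; split.
  split; [|split; [|split]].
  - by move=> x y; apply/RleP/fine_ge0/edist_ge0.
  - move=> x y; split => [dxy|->]; last by rewrite /dist edist_refl.
    by apply: (@close_eq M hT); apply/(@edist_closeP R M x y); rewrite edistE dxy.
  - by move=> x y; rewrite /dist edist_sym.
  - by move=> x y z; apply/RleP; rewrite -lee_fin EFinD -!edistE edist_triangle.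
move=> A; rewrite openE; split => [Aint x Ax|Aball x Ax].
  have /(@nbhs_ballP R M)[e /= e0 eA] : @nbhs M M x A := Aint x Ax.
  exists e; split; first exact/RltP.
  move=> y /RltP dxy; apply: eA; apply: (@edist_lt_ball R M e (x, y)).
  by rewrite edistE lte_fin.
have [e [/RltP e0 eA]] := Aball x Ax.
suff : @nbhs M M x A by [].
apply/(@nbhs_ballP R M); exists (e / 2)%R => /=; first by rewrite divr_gt0.
move=> y bxy; apply: eA => /=; apply/RltP.
have := @edist_fin R M (e / 2)%R (x, y) (divr_gt0 e0 (ltr0Sn _ 1)) bxy.
rewrite edistE lee_fin => /le_lt_trans; apply.
by rewrite ltr_pdivrMr // ltr_pMr // ltr1n.
Qed.

End CountableUniformMetric.

Section Clifford.
Variables (S : topologicalType) (mul : S -> S -> S) (inv : S -> S).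
Hypothesis cS : clifford_semigroup mul inv.

Local Notation E := (idempotents mul).
Local Notation G := (Gsub mul inv).

Lemma mulcA x y z : mul x (mul y z) = mul (mul x y) z.
Proof. by case: cS => [[]]. Qed.

Lemma mulcVc x : mul (mul x (inv x)) x = x.
Proof. by case: cS => [[_ [/(_ x)[]]]]. Qed.

Lemma mulVcV x : mul (mul (inv x) x) (inv x) = inv x.
Proof. by case: cS => [[_ [/(_ x)[]]]]. Qed.

Lemma invc_uniq x y : mul (mul x y) x = x -> mul (mul y x) y = y -> y = inv x.
Proof. by case: cS => [[_ [_ uniq]] _]; exact: uniq. Qed.

Lemma mulcV_comm x : mul x (inv x) = mul (inv x) x.
Proof. by case: cS. Qed.

Lemma invcK x : inv (inv x) = x.
Proof. by apply/esym/invc_uniq; [exact: mulVcV | exact: mulcVc]. Qed.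

Lemma mulcV_idem x : E (mul x (inv x)).
Proof. by rewrite /idempotents /= mulcA mulcVc. Qed.

Lemma idem_invc e : E e -> inv e = e.
Proof. by rewrite /idempotents /= => ee; apply/esym/invc_uniq; rewrite !ee. Qed.

Lemma Gsub_idem e : E e -> G e e.
Proof. by move=> Ee; rewrite /Gsub /= idem_invc. Qed.

Lemma Gsub_mul1l e x : G e x -> mul e x = x.
Proof. by rewrite /Gsub /= => <-; exact: mulcVc. Qed.

Lemma Gsub_mul1r e x : G e x -> mul x e = x.
Proof. by rewrite /Gsub /= => <-; rewrite mulcV_comm mulcA mulcVc. Qed.

Lemma Gsub_mulVl e x : G e x -> mul (inv x) x = e.
Proof. by rewrite /Gsub /= => <-; rewrite mulcV_comm. Qed.

Lemma Gsub_inv e x : G e x -> G e (inv x).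
Proof. by rewrite /Gsub /= invcK => <-; rewrite mulcV_comm. Qed.

Lemma Gsub_invM e x y : G e x -> G e y -> inv (mul x y) = mul (inv y) (inv x).
Proof.
move=> Gx Gy; have Gix := Gsub_inv Gx.
have xy_yx : mul (mul x y) (mul (inv y) (inv x)) = e.
  by rewrite -mulcA (mulcA y) Gy (Gsub_mul1l Gix) Gx.
have yx_xy : mul (mul (inv y) (inv x)) (mul x y) = e.
  by rewrite -mulcA (mulcA (inv x)) (Gsub_mulVl Gx) (Gsub_mul1l Gy) (Gsub_mulVl Gy).
apply/esym/invc_uniq; first by rewrite xy_yx mulcA (Gsub_mul1l Gx).
by rewrite yx_xy mulcA (Gsub_mul1l (Gsub_inv Gy)).
Qed.

Lemma Gsub_mul e x y : G e x -> G e y -> G e (mul x y).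
Proof.
move=> Gx Gy; rewrite /Gsub /= (Gsub_invM Gx Gy).
by rewrite -mulcA (mulcA y) Gy (Gsub_mul1l (Gsub_inv Gx)) Gx.
Qed.

Lemma Gsub_uniq e f x : G e x -> G f x -> e = f.
Proof. by rewrite /Gsub /= => <- <-. Qed.

Lemma Gsub_idempotents e : E e -> G e `&` E = [set e].
Proof.
move=> Ee; apply/seteqP; split => [y [Gy Ey]|_ ->]; last by split; [exact: Gsub_idem|].
by move: Gy; rewrite /Gsub /= idem_invc // Ey.
Qed.

Section Topology.
Hypotheses (mul_cont : continuous (fun p : S * S => mul p.1 p.2))
  (inv_cont : continuous inv)
  (open_sum : forall A : set S, open A <-> forall e, E e -> open_in (G e) A).

Lemma open_mull a U : open U -> open (mul a @^-1` U).
Proof.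
have mula_cont : continuous (mul a).
  move=> y.
  apply: (@continuous_comp _ _ _ (fun y => (a, y)) (fun p : S * S => mul p.1 p.2) y).
    by apply: cvg_pair; [exact: cvg_cst | exact: cvg_id].
  exact: mul_cont.
by move/continuousP: mula_cont; apply.
Qed.

Lemma open_inv U : open U -> open (inv @^-1` U).
Proof. by move/continuousP: inv_cont; apply. Qed.

Lemma open_Gsub e : open (G e).
Proof.
apply/open_sum => f _; have [<-|nef] := pselect (e = f).
  by exists setT; split; [exact: openT | rewrite setIid setTI].
exists set0; split; first exact: open0.
by rewrite set0I; apply/seteqP; split => x // [/Gsub_uniq/[apply]].
Qed.

Lemma mul_square_nbhs e V : open V -> V (mul e e) ->
  exists O, [/\ open O, O e & forall a b, O a -> O b -> V (mul a b)].
Proof.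
move=> oV Vee; have : nbhs (mul (e, e).1 (e, e).2) V by exact: open_nbhs_nbhs.
move=> /mul_cont[[A B] /= [nA nB] AB].
exists (A `&` B)°; split; [exact: open_interior | exact: filterI |].
by move=> a b /interior_subset[Aa _] /interior_subset[_ Bb]; exact: (AB (a, b)).
Qed.

Lemma Gdelta_idempotents_of_Gsub :
  (forall e, E e -> Gdelta_in (G e) [set e]) -> Gdelta E.
Proof.
move=> Gdelta_e.
have /choice[Fe Fe_spec] : forall e, exists F : nat -> set S,
    E e -> (forall i, open (F i)) /\ [set e] = G e `&` \bigcap_i F i.
  move=> e; have [/Gdelta_e[F oF eF]|nEe] := pselect (E e); first by exists F.
  by exists (fun=> set0) => /nEe.
exists (fun i => \bigcup_(e in E) (G e `&` Fe e i)).
  move=> i; apply: bigcup_open => e /Fe_spec[oF _].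
  exact: openI (open_Gsub e) (oF i).
apply/seteqP; split => [e Ee i _|x x_in].
  exists e => //; have [_ eF] := Fe_spec e Ee.
  by have : [set e] e by []; rewrite eF => -[? /(_ i I)].
have [_ eF] := Fe_spec _ (mulcV_idem x).
suff : [set mul x (inv x)] x by move=> /= ->; exact: mulcV_idem.
rewrite eF; split => // i _; have [e _ [Gex Fex]] := x_in i I.
by rewrite -(Gsub_uniq Gex (erefl : G (mul x (inv x)) x)).
Qed.

Definition nbhs_half (V U : set S) : Prop :=
  [/\ open U, E `<=` U, U `<=` V, (forall a, U a -> V (inv a)) &
      (forall a b, U a -> U b -> mul a (inv a) = mul b (inv b) -> V (mul a b))].

Lemma exists_nbhs_half V : open V -> E `<=` V -> exists U, nbhs_half V U.
Proof.
move=> oV EV.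
have /choice[O O_spec] : forall e, exists O : set S, E e ->
    [/\ open O, O e & forall a b, O a -> O b -> V (mul a b)].
  move=> e; have [Ee|nEe] := pselect (E e); last by exists set0 => /nEe.
  have Vee : V (mul e e) by rewrite Ee; exact: EV.
  by have [O ?] := mul_square_nbhs oV Vee; exists O.
exists (V `&` inv @^-1` V `&` \bigcup_(e in E) (G e `&` O e)); split.
- apply: openI; first exact: openI oV (open_inv oV).
  apply: bigcup_open => e /O_spec[oO _ _]; exact: openI (open_Gsub e) oO.
- move=> e Ee; have [_ Oe _] := O_spec e Ee.
  split; first by split; [exact: EV | rewrite /preimage /= idem_invc //; exact: EV].
  by exists e => //; split; [exact: Gsub_idem | ].
- by move=> a [[]].
- by move=> a [[]].
- move=> a b [_ [e Ee [Gea Oea]]] [_ [f Ef [Gfb Ofb]]] Gab.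
  have [_ _ OV] := O_spec e Ee; apply: OV => //.
  by have -> : e = f by rewrite -Gea -Gfb.
Qed.

Section IdempotentsGdelta.
Variable F : nat -> set S.
Hypotheses (oF : forall i, open (F i)) (EF : E = \bigcap_i F i).

(* [set0] is a junk value, used when V is not an open superset of E. *)
Let half (V : set S) : {U | open V -> E `<=` V -> nbhs_half V U}.
Proof.
apply: cid; have [[oV EV]|nV] := pselect (open V /\ E `<=` V).
  by have [U ?] := exists_nbhs_half oV EV; exists U.
by exists set0 => oV EV; case: nV.
Qed.

Fixpoint nbhs_seq n : set S :=
  if n is m.+1 then sval (half (nbhs_seq m)) `&` F m else setT.
Local Notation W := nbhs_seq.

Let open_nbhs_seq_sup n : open (W n) /\ E `<=` W n.
Proof.
elim: n => [|n [oW EW]] /=; first by split; [exact: openT|].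
have [oU EU _ _ _] := svalP (half (W n)) oW EW.
split; first exact: openI oU (oF n).
by move=> e Ee; split; [exact: EU | move: Ee; rewrite EF => /(_ n I)].
Qed.

Lemma open_nbhs_seq n : open (W n).
Proof. by have [] := open_nbhs_seq_sup n. Qed.

Lemma idempotents_sub_nbhs_seq n : E `<=` W n.
Proof. by have [] := open_nbhs_seq_sup n. Qed.

Lemma nbhs_seq_half n : nbhs_half (W n) (sval (half (W n))).
Proof. exact: svalP (half (W n)) (open_nbhs_seq n) (@idempotents_sub_nbhs_seq n). Qed.

Lemma nbhs_seq_sub_F n : W n.+1 `<=` F n.
Proof. by move=> a []. Qed.

Lemma nbhs_seq_decr m n : (m <= n)%N -> W n `<=` W m.
Proof.
elim: n => [|n IH]; first by rewrite leqn0 => /eqP ->.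
rewrite leq_eqVlt => /orP[/eqP -> //|]; rewrite ltnS => /IH Wnm a [Ua _].
by apply: Wnm; have [_ _ UW _ _] := nbhs_seq_half n; exact: UW.
Qed.

Lemma nbhs_seq_inv n a : W n.+1 a -> W n (inv a).
Proof. by have [_ _ _ UV _] := nbhs_seq_half n; move=> [/UV]. Qed.

Lemma nbhs_seq_mul n a b : W n.+1 a -> W n.+1 b ->
  mul a (inv a) = mul b (inv b) -> W n (mul a b).
Proof. by have [_ _ _ _ UV] := nbhs_seq_half n; move=> [Ua _] [Ub _]; exact: UV. Qed.

Hypothesis ccS : countably_compact S.

Lemma seq_cluster_nbhs_seq e (x : nat -> S) z : E e ->
  (forall k, G e (x k) /\ W k (x k)) -> seq_cluster x z -> z = e.
Proof.
move=> Ee x_in zx.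
have Gz : G e z.
  have [k _ Gk] := zx _ (open_Gsub (mul z (inv z))) erefl 0%N.
  by rewrite /Gsub /= -(Gsub_uniq Gk (x_in k).1).
have Wz k : W k z.
  (* z = x_j (x_j^-1 z) for some x_j close to z, with x_j^-1 z in W k.+1. *)
  pose U := G e `&` mul (inv z) @^-1` W k.+2.
  have oU : open U := openI (open_Gsub e) (open_mull (inv z) (open_nbhs_seq k.+2)).
  have Uz : U z.
    split => //; have := @idempotents_sub_nbhs_seq k.+2 e Ee.
    by rewrite -{1}(Gsub_mulVl Gz).
  have [j kj [Ga Wza]] := zx U oU Uz k.+2.
  have Wa : W k.+1 (x j) := nbhs_seq_decr (ltnW kj) (x_in j).2.
  have Gaz : G e (mul (inv (x j)) z) := Gsub_mul (Gsub_inv Ga) Gz.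
  have Wb : W k.+1 (mul (inv (x j)) z).
    by have := @nbhs_seq_inv k.+1 _ Wza; rewrite (Gsub_invM (Gsub_inv Gz) Ga) invcK.
  have := nbhs_seq_mul Wa Wb; rewrite Ga Gaz mulcA Ga (Gsub_mul1l Gz).
  exact.
have Ez : E z by rewrite EF => i _; exact: nbhs_seq_sub_F (Wz i.+1).
suff : [set e] z by [].
by rewrite -(Gsub_idempotents Ee).
Qed.

Lemma Gsub_nbhs_seq_base e U : E e -> open U -> U e ->
  exists n, G e `&` W n `<=` U.
Proof.
move=> Ee oU Ue; apply: contrapT => noW.
have /choice[x x_spec] : forall n, exists y, [/\ G e y, W n y & ~ U y].
  move=> n; apply: contrapT => noy; apply: noW; exists n => y [Gy Wy].
  by apply: contrapT => nUy; apply: noy; exists y.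
have [z zx] := countably_compact_seq_cluster x ccS.
have ze : z = e.
  by apply: seq_cluster_nbhs_seq Ee _ zx => k; have [] := x_spec k.
rewrite ze in zx; have [k _ Uxk] := zx U oU Ue 0%N.
by have [_ _] := x_spec k.
Qed.

Local Open Scope relation_scope.

Definition nbhs_seq_ent n : set (S * S) :=
  [set p | mul p.1 (inv p.1) = mul p.2 (inv p.2) /\ W n (mul (inv p.1) p.2)].

Definition nbhs_seq_entourage : set_system (S * S) :=
  [set P | exists n, nbhs_seq_ent n `<=` P].

Lemma nbhs_seq_ent_decr m n : (m <= n)%N -> nbhs_seq_ent n `<=` nbhs_seq_ent m.
Proof. by move=> mn p [Gp Wp]; split => //; exact: nbhs_seq_decr Wp. Qed.

Lemma nbhs_seq_entourage_filter : Filter nbhs_seq_entourage.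
Proof.
split; first by exists 0%N.
- move=> P Q [m mP] [n nQ]; exists (maxn m n) => p p_in; split.
    by apply/mP/(nbhs_seq_ent_decr (leq_maxl m n)).
  by apply/nQ/(nbhs_seq_ent_decr (leq_maxr m n)).
- by move=> P Q PQ [n nP]; exists n => p /nP /PQ.
Qed.

Lemma nbhs_seq_entourage_diagonal A : nbhs_seq_entourage A -> diagonal `<=` A.
Proof.
move=> [n nA] [x y]; rewrite /diagonal /= => <-; apply: nA; split => //=.
by rewrite -mulcV_comm; exact/idempotents_sub_nbhs_seq/mulcV_idem.
Qed.

Lemma nbhs_seq_entourage_inv A : nbhs_seq_entourage A -> nbhs_seq_entourage A^-1.
Proof.
move=> [n nA]; exists n.+1 => -[x y] [/= Gxy Wxy]; apply: nA; split => //=.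
have Gy : G (mul x (inv x)) y by rewrite /Gsub Gxy.
have := nbhs_seq_inv Wxy; rewrite (Gsub_invM (Gsub_inv (erefl : G _ x)) Gy).
by rewrite invcK.
Qed.

Lemma nbhs_seq_entourage_split A : nbhs_seq_entourage A ->
  exists2 B, nbhs_seq_entourage B & B \; B `<=` A.
Proof.
move=> [n nA]; exists (nbhs_seq_ent n.+1); first by exists n.+1.
move=> [x z] [y [/= Gxy Wxy] [/= Gyz Wyz]]; apply: nA; split => /=; first by rewrite Gxy.
set e := mul x (inv x); have Gx : G e x by [].
have Gy : G e y by rewrite /Gsub /= -Gxy.
have Gz : G e z by rewrite /Gsub /= -Gyz -Gxy.
have := nbhs_seq_mul Wxy Wyz.
rewrite (Gsub_mul (Gsub_inv Gx) Gy) (Gsub_mul (Gsub_inv Gy) Gz) => /(_ erefl).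
by rewrite -mulcA (mulcA y) Gy (Gsub_mul1l Gz).
Qed.

Lemma nbhs_seq_entourage_nbhsE : @nbhs S S = nbhs_ nbhs_seq_entourage.
Proof.
apply/funext => x; apply/seteqP; split => A; set e := mul x (inv x).
  rewrite nbhsE /= => -[B [oB Bx] BA].
  have xBe : (mul x @^-1` B) e by rewrite /preimage /= (Gsub_mul1r (erefl : G e x)).
  have [n nB] := Gsub_nbhs_seq_base (mulcV_idem x) (open_mull x oB) xBe.
  exists (nbhs_seq_ent n); first by exists n.
  move=> y; rewrite /xsection /= in_setE => -[/= Gxy Wxy].
  have Gy : G e y by rewrite /Gsub /= -Gxy.
  have := nB _ (conj (Gsub_mul (Gsub_inv (erefl : G e x)) Gy) Wxy).
  by rewrite /preimage /= mulcA (Gsub_mul1l Gy); exact: BA.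
move=> [P [n nP] PA]; rewrite nbhsE /=.
exists (G e `&` mul (inv x) @^-1` W n).
  split; first exact: openI (open_Gsub e) (open_mull _ (open_nbhs_seq n)).
  split => //; rewrite /preimage /= (Gsub_mulVl (erefl : G e x)).
  exact/idempotents_sub_nbhs_seq/mulcV_idem.
move=> y [Gy Wy]; apply: PA; rewrite /xsection /= in_setE.
by apply: nP; split => //=; rewrite Gy.
Qed.

Definition nbhs_seq_uniform : Type := S.
HB.instance Definition _ := Topological.copy nbhs_seq_uniform S.
HB.instance Definition _ := @Nbhs_isUniform.Build nbhs_seq_uniform
  nbhs_seq_entourage nbhs_seq_entourage_filter nbhs_seq_entourage_diagonal
  nbhs_seq_entourage_inv nbhs_seq_entourage_split nbhs_seq_entourage_nbhsE.

Lemma nbhs_seq_countable_uniformity : countable_uniformity nbhs_seq_uniform.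
Proof.
by apply/countable_uniformityP; exists nbhs_seq_ent => [A [n nA]|n]; exists n.
Qed.

Lemma Gdelta_idempotents_metrizable : hausdorff_space S -> metrizable S.
Proof.
move=> hS.
exact: (@countable_uniformity_metrizable nbhs_seq_uniform hS
  nbhs_seq_countable_uniformity).
Qed.

End IdempotentsGdelta.
End Topology.
End Clifford.

Unset Implicit Arguments.

Theorem proposition4p5 (S : topologicalType) (mul : S -> S -> S) (inv : S -> S) :
  countably_compact S -> hausdorff_space S ->
  topological_clifford_semigroup mul inv ->
  strong_semilattice_of_topgroups mul inv ->
  (metrizable S <-> Gdelta (idempotents mul)) /\
  (Gdelta (idempotents mul) <->
     forall e, idempotents mul e -> Gdelta_in (Gsub mul inv e) [set e]).
Proof.
move=> ccS hS [cS [mul_cont inv_cont]] [_ open_sum].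
have Gdelta_E := Gdelta_idempotents_of_Gsub cS open_sum.
split; split.
- move=> mS; apply: Gdelta_E => e Ee.
  rewrite -(setIidr (_ : [set e] `<=` Gsub mul inv e)); last first.
    by move=> _ ->; exact: Gsub_idem.
  exact/Gdelta_in_setI/metrizable_point_Gdelta.
- move=> [F oF EF].
  exact: (Gdelta_idempotents_metrizable cS mul_cont inv_cont open_sum oF EF ccS hS).
- move=> EGdelta e Ee; rewrite -(Gsub_idempotents cS Ee).
  exact: Gdelta_in_setI.
- exact: Gdelta_E.
Qed.
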